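(* Let $0\le \underline c_{ii}<\overline c_{ii}$, $0\le \underline c_{jj}<\overline c_{jj}$, $\underline c_{ij}<\overline c_{ij}$, $\underline s_{ij}<\overline s_{ij}$ be real numbers and let $\mathcal{D}_{ij}=[\underline c_{ii},\overline c_{ii}]\times[\underline c_{jj},\overline c_{jj}]\times[\underline c_{ij},\overline c_{ij}]\times[\underline s_{ij},\overline s_{ij}]\subset\mathbb{R}^4$, with points written $z=(c_{ii},c_{jj},c_{ij},s_{ij})$. Define $\mathcal{K}^{=}=\{z\in\mathcal{D}_{ij}: c_{ij}^2+s_{ij}^2=c_{ii}c_{jj}\}$, $\mathcal{K}^{\le}=\{z\in\mathcal{D}_{ij}: c_{ij}^2+s_{ij}^2\le c_{ii}c_{jj}\}$ and $G=\{z\in\mathbb{R}^4: c_{ij}^2+s_{ij}^2\ge c_{ii}c_{jj}\}$. Let $V$ be the (finite) set of all points $z$ such that, for some one-dimensional face (edge) $E$ of the hypercube $\mathcal{D}_{ij}$ (i.e. a segment obtained by fixing three of the four coordinates at one of their bounds), $z$ is an extreme point of $\operatorname{conv}(E\cap G)$. Then $$\operatorname{conv}(\mathcal{K}^{=})=\mathcal{K}^{\le}\cap\operatorname{conv}(V)=\Big\{z\in\mathcal{D}_{ij}:\ \exists\lambda\ge 0,\ c_{ij}^2+s_{ij}^2\le c_{ii}c_{jj},\ z=\sum_{k=1}^K\lambda_k z^k,\ \sum_{k=1}^K\lambda_k=1\Big\},$$ where $z^1,\dots,z^K$ is an enumeration of $V$ (so $K\le 32\cdot 2$ is finite). *)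

From Stdlib Require Import Reals List.
Import ListNotations.
Open Scope R_scope.

Record pt := mkpt { cii : R; cjj : R; cij : R; sij : R }.

Definition coord (i : nat) (z : pt) : R :=
  match i with 0%nat => cii z | 1%nat => cjj z | 2%nat => cij z | _ => sij z end.

Definition pzero : pt := mkpt 0 0 0 0.
Definition padd (x y : pt) : pt :=
  mkpt (cii x + cii y) (cjj x + cjj y) (cij x + cij y) (sij x + sij y).
Definition pscale (t : R) (x : pt) : pt :=
  mkpt (t * cii x) (t * cjj x) (t * cij x) (t * sij x).
Definition psum (l : list pt) : pt := fold_right padd pzero l.

Definition conv (S : pt -> Prop) (z : pt) : Prop :=
  exists l : list (R * pt),
    Forall (fun p => 0 <= fst p /\ S (snd p)) l /\
    fold_right Rplus 0 (map fst l) = 1 /\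
    z = psum (map (fun p => pscale (fst p) (snd p)) l).

Definition extreme (C : pt -> Prop) (z : pt) : Prop :=
  C z /\ forall x y t, C x -> C y -> 0 < t < 1 ->
    z = padd (pscale t x) (pscale (1 - t) y) -> x = z /\ y = z.

Definition box (lo hi : pt) (z : pt) : Prop :=
  forall i, (i < 4)%nat -> coord i lo <= coord i z <= coord i hi.

Definition edge (lo hi : pt) (k : nat) (b : nat -> bool) (z : pt) : Prop :=
  box lo hi z /\
  forall i, (i < 4)%nat -> i <> k ->
    coord i z = (if b i then coord i hi else coord i lo).

Definition Keq (lo hi : pt) (z : pt) : Prop :=
  box lo hi z /\ cij z ^ 2 + sij z ^ 2 = cii z * cjj z.
Definition Kle (lo hi : pt) (z : pt) : Prop :=
  box lo hi z /\ cij z ^ 2 + sij z ^ 2 <= cii z * cjj z.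
Definition Gset (z : pt) : Prop := cij z ^ 2 + sij z ^ 2 >= cii z * cjj z.

Definition Vset (lo hi : pt) (z : pt) : Prop :=
  exists k b, (k < 4)%nat /\
    extreme (conv (fun x => edge lo hi k b x /\ Gset x)) z.

Definition comb_of (l : list pt) (z : pt) : Prop :=
  exists lam : list R,
    length lam = length l /\ Forall (fun x => 0 <= x) lam /\
    fold_right Rplus 0 lam = 1 /\
    z = psum (map (fun p => pscale (fst p) (snd p)) (combine lam l)).

From Stdlib Require Import Reals List Lra Psatz Classical Lia.
Import ListNotations.
Open Scope R_scope.

(* K<= is a box cut by a rotated second-order cone, hence convex, so conv(K=) lies in it.
   Every point of the box in G lies in conv(V): with at most one coordinate strictly inside
   its bounds the point sits on an edge, between the first and last points of E ∩ G on
   either side of it, which are extreme points of conv(E ∩ G); with two such coordinates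
   there is a direction in their plane along which qform does not decrease, and moving
   both ways until a further coordinate reaches a bound writes the point as a mixture of
   two points with fewer free coordinates.  Hence conv(K=) lies in K<= ∩ conv(V).
   Conversely the box points that are in G or in conv(K=) form a convex set containing V,
   and a point of it in K<= is in conv(K=).  Finally each edge contributes at most two
   extreme points, so V is finite. *)

Lemma pt_ext (a b : pt) :
  cii a = cii b -> cjj a = cjj b -> cij a = cij b -> sij a = sij b -> a = b.
Proof. destruct a, b; simpl; intros; subst; reflexivity. Qed.

Lemma pt_coord_ext (a b : pt) :
  (forall i, (i < 4)%nat -> coord i a = coord i b) -> a = b.
Proof.
  intros H; apply pt_ext;
    [apply (H 0%nat) | apply (H 1%nat) | apply (H 2%nat) | apply (H 3%nat)]; lia.
Qed.

Lemma coord_padd i x y : coord i (padd x y) = coord i x + coord i y.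
Proof. destruct i as [|[|[|]]]; reflexivity. Qed.

Lemma coord_pscale i t x : coord i (pscale t x) = t * coord i x.
Proof. destruct i as [|[|[|]]]; reflexivity. Qed.

(** * Convex hulls *)

Definition convex (S : pt -> Prop) : Prop :=
  forall x y t, S x -> S y -> 0 <= t <= 1 -> S (padd (pscale t x) (pscale (1 - t) y)).

Definition total_weight (l : list (R * pt)) : R := fold_right Rplus 0 (map fst l).
Definition barycenter (l : list (R * pt)) : pt :=
  psum (map (fun p => pscale (fst p) (snd p)) l).
Definition reweight (c : R) (p : R * pt) : R * pt := (c * fst p, snd p).

Lemma total_weight_reweight c l : total_weight (map (reweight c) l) = c * total_weight l.
Proof. induction l; unfold total_weight in *; simpl; [ring | rewrite IHl; ring]. Qed.

Lemma barycenter_reweight c l : barycenter (map (reweight c) l) = pscale c (barycenter l).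
Proof.
  induction l; unfold barycenter in *; simpl; [|rewrite IHl]; apply pt_ext; simpl; ring.
Qed.

Lemma total_weight_app l1 l2 : total_weight (l1 ++ l2) = total_weight l1 + total_weight l2.
Proof. induction l1; unfold total_weight in *; simpl; [ring | rewrite IHl1; ring]. Qed.

Lemma barycenter_app l1 l2 : barycenter (l1 ++ l2) = padd (barycenter l1) (barycenter l2).
Proof.
  induction l1; unfold barycenter in *; simpl; [|rewrite IHl1]; apply pt_ext; simpl; ring.
Qed.

Definition weighted_in (S : pt -> Prop) (l : list (R * pt)) : Prop :=
  Forall (fun p => 0 <= fst p /\ S (snd p)) l.

Lemma weighted_in_reweight S c l :
  0 <= c -> weighted_in S l -> weighted_in S (map (reweight c) l).
Proof.
  intros Hc HF; induction HF as [|[a s] l [Ha Hs]]; constructor; auto.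
  simpl; split; [apply Rmult_le_pos|]; auto.
Qed.

Lemma total_weight_nonneg S l : weighted_in S l -> 0 <= total_weight l.
Proof.
  induction 1 as [|[a s] l [Ha _] _ IH]; unfold total_weight in *; simpl in *; lra.
Qed.

Lemma barycenter_weightless S l :
  weighted_in S l -> total_weight l = 0 -> barycenter l = pzero.
Proof.
  induction 1 as [|[a s] l [Ha _] Hl IH]; intros Hw; [reflexivity|].
  pose proof (total_weight_nonneg _ _ Hl).
  unfold total_weight, barycenter in *; simpl in *.
  assert (a = 0) by lra; subst a.
  rewrite IH by lra; apply pt_ext; simpl; ring.
Qed.

Lemma conv_split_head S a s rest z :
  weighted_in S ((a, s) :: rest) -> total_weight ((a, s) :: rest) = 1 ->
  z = barycenter ((a, s) :: rest) ->
  let rest' := map (reweight (/ (1 - a))) rest in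
  (a = 1 /\ z = s) \/
  (0 <= a < 1 /\ S s /\ weighted_in S rest' /\ total_weight rest' = 1 /\
   z = padd (pscale a s) (pscale (1 - a) (barycenter rest'))).
Proof.
  intros HF HW Hz rest'; inversion HF as [|? ? [Ha Hs] Hrest]; subst; simpl in *.
  pose proof (total_weight_nonneg _ _ Hrest).
  change (a + total_weight rest = 1) in HW.
  change (padd (pscale a s) (barycenter rest)) with (barycenter ((a, s) :: rest)).
  destruct (Req_dec a 1) as [->|Ha1].
  - left; split; auto.
    change (barycenter ((1, s) :: rest)) with (padd (pscale 1 s) (barycenter rest)).
    rewrite (barycenter_weightless _ _ Hrest) by lra; apply pt_ext; simpl; ring.
  - right; repeat split; try lra; auto.
    + apply weighted_in_reweight; auto; left; apply Rinv_0_lt_compat; lra.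
    + unfold rest'; rewrite total_weight_reweight; field_simplify_eq; lra.
    + change (barycenter ((a, s) :: rest)) with (padd (pscale a s) (barycenter rest)).
      unfold rest'; rewrite barycenter_reweight; apply pt_ext; simpl; field; lra.
Qed.

Lemma conv_of_mem (S : pt -> Prop) z : S z -> conv S z.
Proof.
  intros H; exists [(1, z)]; repeat split.
  - repeat constructor; simpl; auto; lra.
  - simpl; ring.
  - apply pt_ext; simpl; ring.
Qed.

Lemma conv_mono (S T : pt -> Prop) z : (forall x, S x -> T x) -> conv S z -> conv T z.
Proof.
  intros H [l [HF HR]]; exists l; split; auto.
  eapply Forall_impl; [|exact HF]; simpl; intros p [? ?]; auto.
Qed.

Lemma conv_convex S : convex (conv S).
Proof.
  intros x y t [l1 [F1 [W1 Z1]]] [l2 [F2 [W2 Z2]]] Ht.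
  exists (map (reweight t) l1 ++ map (reweight (1 - t)) l2); repeat split.
  - apply Forall_app; split; apply weighted_in_reweight; auto; lra.
  - change (total_weight (map (reweight t) l1 ++ map (reweight (1 - t)) l2) = 1).
    rewrite total_weight_app, !total_weight_reweight.
    unfold total_weight; rewrite W1, W2; ring.
  - change (padd (pscale t x) (pscale (1 - t) y)
            = barycenter (map (reweight t) l1 ++ map (reweight (1 - t)) l2)).
    rewrite barycenter_app, !barycenter_reweight; unfold barycenter; rewrite <- Z1, <- Z2.
    reflexivity.
Qed.

Lemma conv_ind (S P : pt -> Prop) :
  (forall z, S z -> P z) ->
  (forall a s y, 0 <= a < 1 -> S s -> conv S y -> P y ->
     P (padd (pscale a s) (pscale (1 - a) y))) ->
  forall z, conv S z -> P z.
Proof.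
  intros Hbase Hstep z [l [HF [HW Hz]]]; revert z HF HW Hz.
  induction l as [l IH] using
    (well_founded_induction (Wf_nat.well_founded_ltof _ (@length (R * pt)))).
  intros z HF HW Hz; destruct l as [|[a s] rest].
  - unfold total_weight in HW; simpl in HW; lra.
  - destruct (conv_split_head _ _ _ _ _ HF HW Hz)
      as [[_ ->]|[Ha [Hs [Hrest [Hw ->]]]]].
    + inversion HF as [|? ? [_ Hs] _]; auto.
    + apply Hstep; auto; [exists (map (reweight (/ (1 - a))) rest); auto|].
      apply (IH (map (reweight (/ (1 - a))) rest)); auto.
      unfold Wf_nat.ltof; rewrite length_map; simpl; lia.
Qed.

Lemma convex_conv_sub S : convex S -> forall z, conv S z -> S z.
Proof. intros HC; apply conv_ind; auto; intros a s y Ha Hs _ Hy; apply HC; auto; lra. Qed.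

Lemma conv_idem S z : conv (conv S) z -> conv S z.
Proof. apply convex_conv_sub, conv_convex. Qed.

Lemma extreme_conv_mem S z : extreme (conv S) z -> S z.
Proof.
  intros [Hz Hext]; revert z Hz Hext.
  refine (conv_ind S (fun z => (forall x y t, _) -> S z) _ _); auto.
  intros a s y Ha Hs Hy IH Hext.
  destruct (Req_dec a 0) as [->|Ha0].
  - replace (padd (pscale 0 s) (pscale (1 - 0) y)) with y in * by (apply pt_ext; simpl; ring).
    auto.
  - destruct (Hext s y a (conv_of_mem _ _ Hs) Hy) as [<- _]; auto; lra.
Qed.

Lemma convex_between C : convex C ->
  forall x d a b, a <= 0 <= b -> a < b ->
  C (padd x (pscale a d)) -> C (padd x (pscale b d)) -> C x.
Proof.
  intros HC x d a b Hab Hlt Ca Cb.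
  replace x with (padd (pscale (b / (b - a)) (padd x (pscale a d)))
                       (pscale (1 - b / (b - a)) (padd x (pscale b d)))).
  - apply HC; auto; split.
    + apply Rmult_le_pos; [lra | left; apply Rinv_0_lt_compat; lra].
    + apply Rmult_le_reg_r with (b - a); [lra|]; field_simplify; lra.
  - apply pt_ext; simpl; field; lra.
Qed.

(** * The quadratic form *)

Definition qform (z : pt) : R := cij z ^ 2 + sij z ^ 2 - cii z * cjj z.

(* Twice the polar form of [qform]. *)
Definition qpolar (x d : pt) : R :=
  2 * cij x * cij d + 2 * sij x * sij d - cii x * cjj d - cjj x * cii d.

Lemma qform_line x d t :
  qform (padd x (pscale t d)) = qform x + t * qpolar x d + t ^ 2 * qform d.
Proof. unfold qform, qpolar; simpl; ring. Qed.

Lemma qform_pscale c d : qform (pscale c d) = c ^ 2 * qform d.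
Proof. unfold qform; simpl; ring. Qed.

Lemma qpolar_pscale x c d : qpolar x (pscale c d) = c * qpolar x d.
Proof. unfold qpolar; simpl; ring. Qed.

Lemma Gset_qform z : Gset z <-> 0 <= qform z.
Proof. unfold Gset, qform; lra. Qed.

Lemma interval_convex lo hi a b t :
  lo <= a <= hi -> lo <= b <= hi -> 0 <= t <= 1 -> lo <= t * a + (1 - t) * b <= hi.
Proof. intros; split; nra. Qed.

Lemma box_convex lo hi : convex (box lo hi).
Proof.
  intros x y t Hx Hy Ht i Hi; rewrite coord_padd, !coord_pscale.
  apply interval_convex; auto.
Qed.

Lemma edge_convex lo hi k b : convex (edge lo hi k b).
Proof.
  intros x y t [Bx Ex] [By Ey] Ht; split; [apply box_convex; auto|].
  intros i Hi Hik; rewrite coord_padd, !coord_pscale, Ex, Ey; auto; ring.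
Qed.

Lemma box_diag_nonneg lo hi z :
  0 <= cii lo -> 0 <= cjj lo -> box lo hi z -> 0 <= cii z /\ 0 <= cjj z.
Proof.
  intros h1 h3 H; pose proof (H 0%nat ltac:(lia)); pose proof (H 1%nat ltac:(lia)).
  simpl in *; lra.
Qed.

(* Cauchy-Schwarz and AM-GM bound the cross term 2 (x1 x2 + y1 y2) by u1 v2 + u2 v1. *)
Lemma rotated_cone_convex x1 y1 u1 v1 x2 y2 u2 v2 t :
  0 <= u1 -> 0 <= v1 -> 0 <= u2 -> 0 <= v2 -> 0 <= t <= 1 ->
  x1 ^ 2 + y1 ^ 2 <= u1 * v1 -> x2 ^ 2 + y2 ^ 2 <= u2 * v2 ->
  (t * x1 + (1 - t) * x2) ^ 2 + (t * y1 + (1 - t) * y2) ^ 2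
    <= (t * u1 + (1 - t) * u2) * (t * v1 + (1 - t) * v2).
Proof.
  intros. set (P := x1 * x2 + y1 * y2); set (A := u1 * v2 + u2 * v1).
  assert (cauchy_schwarz : P ^ 2 <= (x1 ^ 2 + y1 ^ 2) * (x2 ^ 2 + y2 ^ 2)).
  { replace ((x1 ^ 2 + y1 ^ 2) * (x2 ^ 2 + y2 ^ 2)) with (P ^ 2 + (x1 * y2 - x2 * y1) ^ 2)
      by (unfold P; ring).
    pose proof (pow2_ge_0 (x1 * y2 - x2 * y1)); lra. }
  assert (am_gm : 4 * (u1 * v1) * (u2 * v2) <= A ^ 2).
  { replace (A ^ 2) with (4 * (u1 * v1) * (u2 * v2) + (u1 * v2 - u2 * v1) ^ 2)
      by (unfold A; ring).
    pose proof (pow2_ge_0 (u1 * v2 - u2 * v1)); lra. }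
  assert (HP2 : P ^ 2 <= (u1 * v1) * (u2 * v2)).
  { apply Rle_trans with ((x1 ^ 2 + y1 ^ 2) * (x2 ^ 2 + y2 ^ 2)); auto.
    apply Rmult_le_compat; nra. }
  assert (HA : 0 <= A) by (unfold A; nra).
  assert (cross : 2 * P <= A) by nra.
  replace ((t * x1 + (1 - t) * x2) ^ 2 + (t * y1 + (1 - t) * y2) ^ 2) with
    (t ^ 2 * (x1 ^ 2 + y1 ^ 2) + (1 - t) ^ 2 * (x2 ^ 2 + y2 ^ 2) + 2 * (t * (1 - t)) * P)
    by (unfold P; ring).
  replace ((t * u1 + (1 - t) * u2) * (t * v1 + (1 - t) * v2)) with
    (t ^ 2 * (u1 * v1) + (1 - t) ^ 2 * (u2 * v2) + (t * (1 - t)) * A) by (unfold A; ring).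
  assert (0 <= t * (1 - t)) by nra.
  assert (t ^ 2 * (x1 ^ 2 + y1 ^ 2) <= t ^ 2 * (u1 * v1))
    by (apply Rmult_le_compat_l; auto; apply pow2_ge_0).
  assert ((1 - t) ^ 2 * (x2 ^ 2 + y2 ^ 2) <= (1 - t) ^ 2 * (u2 * v2))
    by (apply Rmult_le_compat_l; auto; apply pow2_ge_0).
  assert ((t * (1 - t)) * (2 * P) <= (t * (1 - t)) * A) by (apply Rmult_le_compat_l; lra).
  lra.
Qed.

Lemma Kle_convex lo hi : 0 <= cii lo -> 0 <= cjj lo -> convex (Kle lo hi).
Proof.
  intros h1 h3 x y t [Bx Qx] [By Qy] Ht; split; [apply box_convex; auto|].
  destruct (box_diag_nonneg _ _ _ h1 h3 Bx), (box_diag_nonneg _ _ _ h1 h3 By).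
  apply rotated_cone_convex; auto.
Qed.

Lemma conv_Keq_sub_Kle lo hi z :
  0 <= cii lo -> 0 <= cjj lo -> conv (Keq lo hi) z -> Kle lo hi z.
Proof.
  intros h1 h3 H; apply (convex_conv_sub _ (Kle_convex lo hi h1 h3)).
  eapply conv_mono; [|exact H]; intros w [B Q]; split; auto; lra.
Qed.

Definition psub (x y : pt) : pt := padd x (pscale (-1) y).

Lemma segment_point p x s :
  padd p (pscale s (psub x p)) = padd (pscale s x) (pscale (1 - s) p).
Proof. apply pt_ext; simpl; ring. Qed.

Lemma qform_crossing p x : qform p < 0 -> 0 <= qform x ->
  exists s, 0 < s <= 1 /\ qform (padd p (pscale s (psub x p))) = 0.
Proof.
  intros Hp Hx; set (f := fun s => qform (padd p (pscale s (psub x p)))).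
  assert (f0 : f 0 = qform p) by (unfold f; f_equal; apply pt_ext; simpl; ring).
  assert (f1 : f 1 = qform x) by (unfold f; f_equal; apply pt_ext; simpl; ring).
  destruct (Req_dec (qform x) 0) as [E|E]; [exists 1; split; [lra | change (f 1 = 0); lra]|].
  assert (Hc : continuity f) by (unfold f, qform; simpl; reg).
  destruct (IVT f 0 1 Hc ltac:(lra) ltac:(lra) ltac:(lra)) as [s [Hs Hf]].
  exists s; repeat split; try lra; auto.
  destruct (Req_dec s 0) as [->|]; lra.
Qed.

Section HullOfKeq.
Variables lo hi : pt.

Definition G_or_hull (z : pt) : Prop :=
  box lo hi z /\ (0 <= qform z \/ conv (Keq lo hi) z).

Lemma G_or_hull_toward p x : G_or_hull x -> box lo hi p -> qform p < 0 ->
  exists s, 0 < s <= 1 /\ conv (Keq lo hi) (padd p (pscale s (psub x p))).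
Proof.
  intros [Bx [Qx|Hx]] Bp Qp.
  - destruct (qform_crossing p x Qp Qx) as [s [Hs Q]]; exists s; split; auto.
    apply conv_of_mem; split.
    + rewrite segment_point; apply box_convex; auto; lra.
    + unfold qform in Q; lra.
  - exists 1; split; [lra|].
    replace (padd p (pscale 1 (psub x p))) with x by (apply pt_ext; simpl; ring); auto.
Qed.

(* If the mixture p of x and y is outside G, follow the segments from p towards x and
   towards y to a point where qform vanishes (or to x, y themselves when they lie in
   conv K=); p lies between these two points of conv K=. *)
Lemma G_or_hull_convex : convex G_or_hull.
Proof.
  intros x y t Ux Uy Ht; set (p := padd (pscale t x) (pscale (1 - t) y)).
  assert (Bp : box lo hi p) by (apply box_convex; auto; [apply Ux | apply Uy]).
  split; auto; destruct (Rle_lt_dec 0 (qform p)) as [Q|Q]; [left; auto | right].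
  destruct (Req_dec t 0) as [E|E].
  { replace p with y in * by (unfold p; subst; apply pt_ext; simpl; ring).
    destruct Uy as [_ [Q'|T']]; auto; lra. }
  destruct (Req_dec t 1) as [E'|E'].
  { replace p with x in * by (unfold p; subst; apply pt_ext; simpl; ring).
    destruct Ux as [_ [Q'|T']]; auto; lra. }
  destruct (G_or_hull_toward p x Ux Bp Q) as [s [Hs Tx]].
  destruct (G_or_hull_toward p y Uy Bp Q) as [s' [Hs' Ty]].
  assert (0 <= s' * t / (1 - t))
    by (apply Rmult_le_pos; [nra | left; apply Rinv_0_lt_compat; lra]).
  apply (convex_between _ (conv_convex _) p (psub x p) (- (s' * t / (1 - t))) s);
    auto; try lra.
  - replace (padd p (pscale (- (s' * t / (1 - t))) (psub x p)))
      with (padd p (pscale s' (psub y p))); auto.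
    unfold p; apply pt_ext; simpl; field; lra.
Qed.

Lemma Kle_conv_sub_conv_Keq (S : pt -> Prop) z :
  (forall x, S x -> box lo hi x /\ Gset x) ->
  Kle lo hi z -> conv S z -> conv (Keq lo hi) z.
Proof.
  intros HS [Bz Qz] Hz.
  assert (Uz : G_or_hull z).
  { apply (convex_conv_sub _ G_or_hull_convex); eapply conv_mono; [|exact Hz].
    intros x Sx; destruct (HS x Sx) as [Bx Gx]; split; auto; left; apply Gset_qform; auto. }
  destruct Uz as [_ [Q|Tz]]; auto.
  apply conv_of_mem; split; auto; unfold qform in Q; lra.
Qed.

End HullOfKeq.

(** * Points of the box in G lie in conv(V) *)

Lemma leftmost_nonneg (f : R -> R) L : continuity f -> L <= 0 -> 0 <= f 0 ->
  exists m, L <= m <= 0 /\ 0 <= f m /\ forall t, L <= t < m -> f t < 0.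
Proof.
  intros Hc HL H0.
  set (E := fun u => L <= u /\ forall s, L <= s < u -> f s < 0).
  assert (Eb : forall u, E u -> u <= 0).
  { intros u [_ Hu]; destruct (Rle_lt_dec u 0); auto; specialize (Hu 0); lra. }
  destruct (completeness E) as [m [Hub Hlub]].
  { exists 0; intros u Hu; auto. }
  { exists L; split; [lra | intros; lra]. }
  assert (HLm : L <= m) by (apply Hub; split; [lra | intros; lra]).
  assert (Hm0 : m <= 0) by (apply Hlub; intros u Hu; auto).
  assert (Hbelow : forall t, L <= t < m -> f t < 0).
  { intros t Ht; apply NNPP; intros Hn; assert (m <= t); [|lra].
    apply Hlub; intros u [Hu1 Hu2].
    destruct (Rle_lt_dec u t); auto; exfalso; apply Hn, Hu2; lra. }
  exists m; repeat split; auto; try lra.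
  destruct (Rle_lt_dec 0 (f m)) as [|Hneg]; auto; exfalso.
  (* f stays negative a little to the right of m, contradicting that m is the supremum. *)
  destruct (Hc m (- f m) ltac:(lra)) as [d [Hd Hdd]]; simpl in Hdd; unfold R_dist in Hdd.
  assert (E (m + d / 2)).
  { split; [lra|]; intros s Hs.
    destruct (Rlt_le_dec s m) as [Hsm|Hsm]; [apply Hbelow; lra|].
    destruct (Req_dec s m) as [->|Hne]; auto.
    assert (Rabs (f s - f m) < - f m)
      by (apply Hdd; split; [split; [exact I | auto] | rewrite Rabs_right; lra]).
    destruct (Rabs_def2 _ _ H); lra. }
  pose proof (Hub _ H); lra.
Qed.

Lemma rightmost_nonneg (f : R -> R) H : continuity f -> 0 <= H -> 0 <= f 0 ->
  exists M, 0 <= M <= H /\ 0 <= f M /\ forall t, M < t <= H -> f t < 0.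
Proof.
  intros Hc HH H0.
  destruct (leftmost_nonneg (fun t => f (- t)) (- H)) as [m [Hm [Hf Hb]]].
  - intro x; apply (continuity_pt_comp (fun t => - t) f); [reg | apply Hc].
  - lra.
  - rewrite Ropp_0; auto.
  - exists (- m); repeat split; auto; try lra.
    intros t Ht; replace t with (- - t) by ring; apply Hb; lra.
Qed.

Definition unit_pt (k : nat) : pt :=
  mkpt (if Nat.eqb k 0 then 1 else 0) (if Nat.eqb k 1 then 1 else 0)
       (if Nat.eqb k 2 then 1 else 0) (if Nat.eqb k 3 then 1 else 0).

Lemma coord_unit_pt i k : (i < 4)%nat -> (k < 4)%nat ->
  coord i (unit_pt k) = if Nat.eqb i k then 1 else 0.
Proof.
  intros Hi Hk; destruct i as [|[|[|[|i]]]]; try lia;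
    destruct k as [|[|[|[|k]]]]; try lia; reflexivity.
Qed.

Section EdgeHull.
Variables lo hi : pt.

Definition edgeG k b (z : pt) : Prop := edge lo hi k b z /\ Gset z.

Lemma edge_eq k b u v : (k < 4)%nat ->
  edge lo hi k b u -> edge lo hi k b v -> coord k u = coord k v -> u = v.
Proof.
  intros Hk [_ Eu] [_ Ev] Hc; apply pt_coord_ext; intros i Hi.
  destruct (Nat.eq_dec i k) as [->|Hne]; auto; rewrite Eu, Ev; auto.
Qed.

Lemma conv_edgeG_edge k b z : conv (edgeG k b) z -> edge lo hi k b z.
Proof.
  intros H; apply (convex_conv_sub _ (edge_convex lo hi k b)).
  eapply conv_mono; [|exact H]; intros w [E _]; auto.
Qed.

Lemma edge_move k b x t : (k < 4)%nat -> edge lo hi k b x ->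
  coord k lo <= coord k x + t <= coord k hi ->
  edge lo hi k b (padd x (pscale t (unit_pt k))).
Proof.
  intros Hk [Bx Ex] Ht; split.
  - intros i Hi; rewrite coord_padd, coord_pscale, coord_unit_pt; auto.
    destruct (Nat.eq_dec i k) as [->|Hne]; [rewrite Nat.eqb_refl; lra|].
    rewrite (proj2 (Nat.eqb_neq i k) Hne), Rmult_0_r, Rplus_0_r; auto.
  - intros i Hi Hne; rewrite coord_padd, coord_pscale, coord_unit_pt,
      (proj2 (Nat.eqb_neq i k) Hne), Ex; auto; ring.
Qed.

Lemma edge_param k b x z : (k < 4)%nat -> edge lo hi k b x -> edge lo hi k b z ->
  z = padd x (pscale (coord k z - coord k x) (unit_pt k)).
Proof.
  intros Hk Ex Ez; apply (edge_eq k b); auto.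
  - apply edge_move; auto; rewrite Rplus_minus; apply Ez; auto.
  - rewrite coord_padd, coord_pscale, coord_unit_pt, Nat.eqb_refl; auto; ring.
Qed.

Lemma edgeG_extreme_of_bound k b z0 c : (k < 4)%nat -> c <> 0 -> edgeG k b z0 ->
  (forall a, conv (edgeG k b) a -> c * coord k z0 <= c * coord k a) ->
  extreme (conv (edgeG k b)) z0.
Proof.
  intros Hk Hc Hz Hall; split; [apply conv_of_mem; auto|].
  intros a a' t Ca Ca' Ht Hz0.
  pose proof (Hall a Ca); pose proof (Hall a' Ca').
  assert (Hk0 : coord k z0 = t * coord k a + (1 - t) * coord k a')
    by (rewrite Hz0 at 1; rewrite coord_padd, !coord_pscale; ring).
  assert (c * coord k a = c * coord k z0 /\ c * coord k a' = c * coord k z0)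
    as [E E'] by (rewrite Hk0 in *; nra).
  apply Rmult_eq_reg_l in E, E'; auto.
  destruct Hz as [Ez _]; split; apply (edge_eq k b); auto; apply conv_edgeG_edge; auto.
Qed.

Lemma conv_edgeG_coord_range k b x m M : (k < 4)%nat -> edge lo hi k b x ->
  (forall t, coord k lo - coord k x <= t < m ->
     qform (padd x (pscale t (unit_pt k))) < 0) ->
  (forall t, M < t <= coord k hi - coord k x ->
     qform (padd x (pscale t (unit_pt k))) < 0) ->
  forall a, conv (edgeG k b) a -> coord k x + m <= coord k a <= coord k x + M.
Proof.
  intros Hk Ex Hbm HbM a Ca.
  apply (convex_conv_sub (fun a => coord k x + m <= coord k a <= coord k x + M)); auto.
  - intros u v t Bu Bv Ht; rewrite coord_padd, !coord_pscale; apply interval_convex; auto.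
  - eapply conv_mono; [|exact Ca]; intros z [Ez Gz].
    pose proof (proj1 Ez k Hk); apply Gset_qform in Gz.
    rewrite (edge_param k b x z Hk Ex Ez) in Gz; split.
    + destruct (Rlt_le_dec (coord k z - coord k x) m); [|lra].
      specialize (Hbm (coord k z - coord k x)); lra.
    + destruct (Rle_lt_dec (coord k z - coord k x) M); [lra|].
      specialize (HbM (coord k z - coord k x)); lra.
Qed.

(* On an edge through x, qform is a quadratic in the free coordinate; the first and last
   points of E ∩ G on either side of x are extreme points of conv(E ∩ G). *)
Lemma edgeG_in_conv_V k b x : (k < 4)%nat -> edgeG k b x -> conv (Vset lo hi) x.
Proof.
  intros Hk [Ex Gx].
  set (y := fun t => padd x (pscale t (unit_pt k))).
  set (f := fun t => qform (y t)).
  assert (Hc : continuity f) by (unfold f, y, qform; simpl; reg).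
  assert (f0 : 0 <= f 0).
  { unfold f, y; replace (padd x (pscale 0 (unit_pt k))) with x
      by (apply pt_ext; simpl; ring); apply Gset_qform; auto. }
  assert (Bk := proj1 Ex k Hk).
  destruct (leftmost_nonneg f (coord k lo - coord k x) Hc ltac:(lra) f0)
    as [m [Hm [Hfm Hbm]]].
  destruct (rightmost_nonneg f (coord k hi - coord k x) Hc ltac:(lra) f0)
    as [M [HM [HfM HbM]]].
  pose proof (conv_edgeG_coord_range k b x m M Hk Ex Hbm HbM) as Hrange.
  assert (coord_y : forall t, coord k (y t) = coord k x + t)
    by (intros t; unfold y; rewrite coord_padd, coord_pscale, coord_unit_pt, Nat.eqb_refl;
        auto; ring).
  assert (edgeG_y : forall t, m <= t <= M -> 0 <= f t -> edgeG k b (y t))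
    by (intros t Ht Hft; split; [apply edge_move; auto; lra | apply Gset_qform; auto]).
  assert (Vm : Vset lo hi (y m)).
  { exists k, b; split; auto.
    apply (edgeG_extreme_of_bound k b (y m) 1); [auto | lra | apply edgeG_y; lra |].
    intros a Ca; rewrite coord_y; specialize (Hrange a Ca); lra. }
  assert (VM : Vset lo hi (y M)).
  { exists k, b; split; auto.
    apply (edgeG_extreme_of_bound k b (y M) (-1)); [auto | lra | apply edgeG_y; lra |].
    intros a Ca; rewrite coord_y; specialize (Hrange a Ca); lra. }
  destruct (Req_dec m M) as [E|E].
  - replace x with (y m) by (unfold y; replace m with 0 by lra; apply pt_ext; simpl; ring).
    apply conv_of_mem; auto.
  - apply (convex_between _ (conv_convex _) x (unit_pt k) m M); try lra;
      apply conv_of_mem; auto.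
Qed.

End EdgeHull.

Lemma segment_exit a b l u : l < a < u -> b <> 0 ->
  exists s, 0 < s /\ (a + s * b = l \/ a + s * b = u) /\
    forall t, 0 <= t <= s -> l <= a + t * b <= u.
Proof.
  intros Ha Hb; destruct (Rlt_dec 0 b) as [Hp|Hn].
  - exists ((u - a) / b); split; [apply Rdiv_lt_0_compat; lra|].
    split; [right; field; lra|]; intros t Ht.
    assert (t * b <= (u - a) / b * b) by (apply Rmult_le_compat_r; lra).
    assert (0 <= t * b) by (apply Rmult_le_pos; lra).
    replace ((u - a) / b * b) with (u - a) in * by (field; lra); lra.
  - exists ((a - l) / - b); split; [apply Rdiv_lt_0_compat; lra|].
    split; [left; field; lra|]; intros t Ht.
    assert (t * - b <= (a - l) / - b * - b) by (apply Rmult_le_compat_r; lra).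
    assert (0 <= t * - b) by (apply Rmult_le_pos; lra).
    replace ((a - l) / - b * - b) with (a - l) in * by (field; lra); nra.
Qed.

Lemma segment_exit2 a1 b1 l1 u1 a2 b2 l2 u2 :
  l1 < a1 < u1 -> l2 < a2 < u2 -> (b1 <> 0 \/ b2 <> 0) ->
  exists t, 0 < t /\ l1 <= a1 + t * b1 <= u1 /\ l2 <= a2 + t * b2 <= u2 /\
    ((a1 + t * b1 = l1 \/ a1 + t * b1 = u1) \/ (a2 + t * b2 = l2 \/ a2 + t * b2 = u2)).
Proof.
  intros H1 H2 Hb.
  destruct (Req_dec b1 0) as [->|E1]; destruct (Req_dec b2 0) as [->|E2]; [tauto| | |].
  - destruct (segment_exit a2 b2 l2 u2 H2 E2) as [s [Hs [Hh Hin]]].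
    exists s; rewrite Rmult_0_r, Rplus_0_r; repeat split; auto; try lra; apply Hin; lra.
  - destruct (segment_exit a1 b1 l1 u1 H1 E1) as [s [Hs [Hh Hin]]].
    exists s; rewrite Rmult_0_r, Rplus_0_r; repeat split; auto; try lra; apply Hin; lra.
  - destruct (segment_exit a1 b1 l1 u1 H1 E1) as [s1 [Hs1 [Hh1 Hin1]]].
    destruct (segment_exit a2 b2 l2 u2 H2 E2) as [s2 [Hs2 [Hh2 Hin2]]].
    destruct (Rle_lt_dec s1 s2); [exists s1 | exists s2];
      repeat split; auto; try (apply Hin1; lra); try (apply Hin2; lra).
Qed.

Section BoxHull.
Variables lo hi : pt.
Hypothesis h1 : 0 <= cii lo.
Hypothesis h3 : 0 <= cjj lo.

Definition interior (i : nat) (x : pt) : Prop := coord i lo < coord i x < coord i hi.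

Definition interior_ind (i : nat) (x : pt) : nat :=
  if Rlt_dec (coord i lo) (coord i x) then
    if Rlt_dec (coord i x) (coord i hi) then 1 else 0
  else 0.

Definition n_interior (x : pt) : nat :=
  interior_ind 0 x + interior_ind 1 x + interior_ind 2 x + interior_ind 3 x.

Lemma interior_indP i x :
  (interior_ind i x = 1%nat /\ interior i x) \/ (interior_ind i x = 0%nat /\ ~ interior i x).
Proof.
  unfold interior_ind, interior.
  destruct (Rlt_dec (coord i lo) (coord i x)), (Rlt_dec (coord i x) (coord i hi));
    [left | right | right | right]; split; auto; lra.
Qed.

Lemma n_interior_decr i j x y : (i < 4)%nat -> (j < 4)%nat -> i <> j ->
  (forall k, (k < 4)%nat -> k <> i -> k <> j -> coord k y = coord k x) ->
  interior i x -> interior j x -> ~ interior i y \/ ~ interior j y ->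
  (n_interior y < n_interior x)%nat.
Proof.
  intros Hi Hj Hij Heq Ix Jx Hy.
  assert (Hk : forall k, (k < 4)%nat -> k <> i -> k <> j ->
                 interior_ind k y = interior_ind k x) by (intros k Hk Hki Hkj; unfold interior_ind; rewrite Heq; auto).
  pose proof (Hk 0%nat); pose proof (Hk 1%nat); pose proof (Hk 2%nat); pose proof (Hk 3%nat).
  destruct (interior_indP i x) as [[Ix' _]|[_ []]]; auto.
  destruct (interior_indP j x) as [[Jx' _]|[_ []]]; auto.
  destruct (interior_indP i y) as [[Iy HIy]|[Iy _]], (interior_indP j y) as [[Jy HJy]|[Jy _]];
    [tauto | | |]; unfold n_interior;
    destruct i as [|[|[|[|i]]]]; try lia; destruct j as [|[|[|[|j]]]]; lia.
Qed.

Lemma edge_of_n_interior_le1 x : box lo hi x -> (n_interior x <= 1)%nat ->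
  exists k b, (k < 4)%nat /\ edge lo hi k b x.
Proof.
  intros Bx Hn.
  assert (Hk : exists k, (k < 4)%nat /\ forall i, (i < 4)%nat -> i <> k -> ~ interior i x).
  { destruct (interior_indP 0 x) as [[? _]|[? ?]], (interior_indP 1 x) as [[? _]|[? ?]],
      (interior_indP 2 x) as [[? _]|[? ?]], (interior_indP 3 x) as [[? _]|[? ?]];
      unfold n_interior in Hn; try lia;
      [exists 0%nat | exists 1%nat | exists 2%nat | exists 3%nat | exists 0%nat];
      split; try lia; intros i Hi Hik; destruct i as [|[|[|[|i]]]]; auto; lia. }
  destruct Hk as [k [Hk Hnot]].
  exists k, (fun i => if Req_EM_T (coord i x) (coord i hi) then true else false).
  split; auto; split; auto; intros i Hi Hik.
  specialize (Hnot i Hi Hik); specialize (Bx i Hi); unfold interior in Hnot.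
  destruct (Req_EM_T (coord i x) (coord i hi)); auto.
  destruct (Req_dec (coord i x) (coord i lo)); auto; lra.
Qed.

Lemma two_interior x : (1 < n_interior x)%nat ->
  exists i j, (i < j < 4)%nat /\ interior i x /\ interior j x.
Proof.
  intros Hn; unfold n_interior in Hn.
  destruct (interior_indP 0 x) as [[? ?]|[? _]], (interior_indP 1 x) as [[? ?]|[? _]],
    (interior_indP 2 x) as [[? ?]|[? _]], (interior_indP 3 x) as [[? ?]|[? _]]; try lia;
    match goal with
    | _ : interior ?i x, _ : interior ?j x |- _ =>
        exists i, j; split; [lia | auto]
    end.
Qed.

Definition supported_on (i j : nat) (d : pt) : Prop :=
  forall k, (k < 4)%nat -> k <> i -> k <> j -> coord k d = 0.

Lemma ascent_direction i j x : (i < j < 4)%nat -> box lo hi x ->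
  exists d, supported_on i j d /\ (coord i d <> 0 \/ coord j d <> 0) /\
    qpolar x d = 0 /\ 0 <= qform d.
Proof.
  intros Hij Bx; destruct (box_diag_nonneg lo hi x h1 h3 Bx) as [P1 P2].
  destruct i as [|[|[|[|i]]]], j as [|[|[|[|j]]]]; try lia;
  [ destruct (Req_dec (cjj x) 0) as [E|E];
      [exists (mkpt 1 0 0 0) | exists (mkpt (cii x) (- cjj x) 0 0)]
  | destruct (Req_dec (cjj x) 0) as [E|E];
      [exists (mkpt 1 0 0 0) | exists (mkpt (2 * cij x) 0 (cjj x) 0)]
  | destruct (Req_dec (cjj x) 0) as [E|E];
      [exists (mkpt 1 0 0 0) | exists (mkpt (2 * sij x) 0 0 (cjj x))]
  | destruct (Req_dec (cii x) 0) as [E|E];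
      [exists (mkpt 0 1 0 0) | exists (mkpt 0 (2 * cij x) (cii x) 0)]
  | destruct (Req_dec (cii x) 0) as [E|E];
      [exists (mkpt 0 1 0 0) | exists (mkpt 0 (2 * sij x) 0 (cii x))]
  | destruct (Req_dec (cij x) 0) as [E|E]; [destruct (Req_dec (sij x) 0) as [E'|E']|];
      [exists (mkpt 0 0 1 0) | exists (mkpt 0 0 (- sij x) (cij x))
      | exists (mkpt 0 0 (- sij x) (cij x))] ];
  (split; [intros [|[|[|[|k]]]]; simpl; intros; try lia; reflexivity|]);
  unfold qpolar, qform; simpl; repeat split;
  try (rewrite ?E, ?E'; ring_simplify; lra); try nra.
Qed.

(* Moving along d keeps x in G since qform (x + t d) = qform x + t^2 qform d; stop when one
   of the two free coordinates reaches a bound. *)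
Lemma slide_to_face i j x d : (i < j < 4)%nat -> interior i x -> interior j x ->
  box lo hi x -> Gset x -> supported_on i j d -> (coord i d <> 0 \/ coord j d <> 0) ->
  qpolar x d = 0 -> 0 <= qform d ->
  exists t, 0 < t /\ box lo hi (padd x (pscale t d)) /\ Gset (padd x (pscale t d)) /\
    (n_interior (padd x (pscale t d)) < n_interior x)%nat.
Proof.
  intros Hij Ii Ij Bx Gx Hs Hn Hb Hq.
  destruct (segment_exit2 _ (coord i d) _ _ _ (coord j d) _ _ Ii Ij Hn)
    as [t [Ht [Bi [Bj Hexit]]]].
  assert (Hc : forall k, coord k (padd x (pscale t d)) = coord k x + t * coord k d)
    by (intros; rewrite coord_padd, coord_pscale; auto).
  exists t; split; [auto | split; [|split]].
  - intros k Hk; rewrite Hc.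
    destruct (Nat.eq_dec k i) as [->|]; auto; destruct (Nat.eq_dec k j) as [->|]; auto.
    rewrite Hs, Rmult_0_r, Rplus_0_r; auto.
  - apply Gset_qform; rewrite qform_line, Hb; apply Gset_qform in Gx.
    pose proof (Rmult_le_pos _ _ (pow2_ge_0 t) Hq); lra.
  - apply (n_interior_decr i j); auto; try lia.
    + intros k Hk Hki Hkj; rewrite Hc, Hs; auto; ring.
    + unfold interior; rewrite !Hc; lra.
Qed.

Lemma box_G_in_conv_V x : box lo hi x -> Gset x -> conv (Vset lo hi) x.
Proof.
  remember (n_interior x) as n eqn:Hn; revert x Hn.
  induction n as [n IH] using (well_founded_induction Wf_nat.lt_wf).
  intros x -> Bx Gx.
  destruct (Compare_dec.le_lt_dec (n_interior x) 1) as [Hle|Hgt].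
  - destruct (edge_of_n_interior_le1 x Bx Hle) as [k [b [Hk Ex]]].
    apply (edgeG_in_conv_V lo hi k b x Hk); split; auto.
  - destruct (two_interior x Hgt) as [i [j [Hij [Ii Ij]]]].
    destruct (ascent_direction i j x Hij Bx) as [d [Hs [Hnz [Hb Hq]]]].
    destruct (slide_to_face i j x d Hij Ii Ij Bx Gx Hs Hnz Hb Hq)
      as [t1 [Ht1 [B1 [G1 N1]]]].
    destruct (slide_to_face i j x (pscale (-1) d) Hij Ii Ij Bx Gx)
      as [t2 [Ht2 [B2 [G2 N2]]]].
    + intros k Hk Hki Hkj; rewrite coord_pscale, Hs; auto; ring.
    + rewrite !coord_pscale; lra.
    + rewrite qpolar_pscale, Hb; ring.
    + rewrite qform_pscale; apply Rmult_le_pos; [apply pow2_ge_0 | auto].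
    + apply (convex_between _ (conv_convex _) x d (- t2) t1); try lra.
      * replace (padd x (pscale (- t2) d)) with (padd x (pscale t2 (pscale (-1) d)))
          by (apply pt_ext; simpl; ring).
        apply (IH _ N2 _ eq_refl); auto.
      * apply (IH _ N1 _ eq_refl); auto.
Qed.

End BoxHull.

(** * Finiteness of V *)

Definition finite (P : pt -> Prop) : Prop := exists l, forall z, P z -> In z l.

Lemma finite_sub (P Q : pt -> Prop) : (forall z, P z -> Q z) -> finite Q -> finite P.
Proof. intros H [l Hl]; exists l; auto. Qed.

Lemma finite_at_most_two (P : pt -> Prop) :
  (forall a b c, P a -> P b -> P c -> a = b \/ a = c \/ b = c) -> finite P.
Proof.
  intros H; destruct (classic (exists z, P z)) as [[z1 H1]|N];
    [|exists []; intros z Hz; apply N; eauto].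
  destruct (classic (exists z, P z /\ z <> z1)) as [[z2 [H2 N2]]|N'].
  - exists [z1; z2]; intros z Hz; simpl.
    destruct (H z1 z2 z H1 H2 Hz) as [E|[E|E]]; subst; tauto.
  - exists [z1]; intros z Hz; left; apply NNPP; intros Hn; apply N'; eauto.
Qed.

Lemma finite_ex_bool (Q : bool -> pt -> Prop) :
  (forall b, finite (Q b)) -> finite (fun z => exists b, Q b z).
Proof.
  intros H; destruct (H true) as [l1 H1], (H false) as [l2 H2].
  exists (l1 ++ l2); intros z [[|] Hz]; apply in_or_app; auto.
Qed.

Lemma finite_ex_lt4 (Q : nat -> pt -> Prop) :
  (forall k, (k < 4)%nat -> finite (Q k)) -> finite (fun z => exists k, (k < 4)%nat /\ Q k z).
Proof.
  intros H.
  destruct (H 0%nat ltac:(lia)) as [l0 H0], (H 1%nat ltac:(lia)) as [l1 H1],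
    (H 2%nat ltac:(lia)) as [l2 H2], (H 3%nat ltac:(lia)) as [l3 H3].
  exists (l0 ++ l1 ++ l2 ++ l3); intros z [k [Hk Hz]]; rewrite !in_app_iff.
  destruct k as [|[|[|[|k]]]]; auto; lia.
Qed.

Lemma finite_enum (P : pt -> Prop) : finite P -> exists l, NoDup l /\ forall z, P z <-> In z l.
Proof.
  intros [L HL].
  assert (filtered : forall L : list pt, exists l, NoDup l /\ forall z, In z l <-> In z L /\ P z).
  { induction L0 as [|a L0 [l [Nl Hl]]]; [exists []; split; [constructor | simpl; tauto]|].
    destruct (classic (P a /\ ~ In a l)) as [[Pa Na]|Hn].
    - exists (a :: l); split; [constructor; auto|]; intros z; simpl; rewrite Hl.
      split; [intros [<-|[? ?]] | intros [[<-|Hz] Pz]]; auto.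
    - exists l; split; auto; intros z; simpl; rewrite Hl; split; [tauto|].
      intros [[<-|Hz] Pz]; auto; split; auto.
      apply NNPP; intros Hn2; apply Hn; split; auto; rewrite Hl; tauto. }
  destruct (filtered L) as [l [Nl Hl]]; exists l; split; auto.
  intros z; rewrite Hl; split; [|tauto]; auto.
Qed.

Section EdgeExtremeFinite.
Variables lo hi : pt.

Lemma edge_extreme_not_between k b u v w : (k < 4)%nat ->
  conv (edgeG lo hi k b) u -> conv (edgeG lo hi k b) w -> extreme (conv (edgeG lo hi k b)) v ->
  ~ coord k u < coord k v < coord k w.
Proof.
  intros Hk Cu Cw [Cv Ev] Hc.
  pose proof (conv_edgeG_edge lo hi _ _ _ Cu) as [_ Eu].
  pose proof (conv_edgeG_edge lo hi _ _ _ Cv) as [_ Evv].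
  pose proof (conv_edgeG_edge lo hi _ _ _ Cw) as [_ Ew].
  set (t := (coord k w - coord k v) / (coord k w - coord k u)).
  assert (Ht : 0 < t < 1).
  { unfold t; split; [apply Rdiv_lt_0_compat; lra|].
    apply Rmult_lt_reg_r with (coord k w - coord k u); [lra|]; field_simplify; lra. }
  destruct (Ev u w t Cu Cw Ht) as [E1 _]; [|subst; lra].
  apply pt_coord_ext; intros i Hi; rewrite coord_padd, !coord_pscale.
  destruct (Nat.eq_dec i k) as [->|Hne]; [unfold t; field; lra|].
  rewrite (Eu i Hi Hne), (Ew i Hi Hne), (Evv i Hi Hne); ring.
Qed.

Lemma edge_extreme_at_most_two k b : (k < 4)%nat -> forall u v w,
  extreme (conv (edgeG lo hi k b)) u -> extreme (conv (edgeG lo hi k b)) v ->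
  extreme (conv (edgeG lo hi k b)) w -> u = v \/ u = w \/ v = w.
Proof.
  intros Hk u v w Hu Hv Hw.
  pose proof (conv_edgeG_edge lo hi _ _ _ (proj1 Hu)).
  pose proof (conv_edgeG_edge lo hi _ _ _ (proj1 Hv)).
  pose proof (conv_edgeG_edge lo hi _ _ _ (proj1 Hw)).
  pose proof (edge_extreme_not_between k b) as Hnb.
  destruct (Req_dec (coord k u) (coord k v)) as [|Euv];
    [left; apply (edge_eq lo hi k b); auto|].
  destruct (Req_dec (coord k u) (coord k w)) as [|Euw];
    [right; left; apply (edge_eq lo hi k b); auto|].
  destruct (Req_dec (coord k v) (coord k w)) as [|Evw];
    [right; right; apply (edge_eq lo hi k b); auto|].
  exfalso.
  destruct (Rdichotomy _ _ Euv), (Rdichotomy _ _ Euw), (Rdichotomy _ _ Evw);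
    unfold Rgt in *;
    match goal with
    | _ : coord k ?p < coord k ?q, _ : coord k ?q < coord k ?r |- _ =>
        apply (Hnb p q r); auto; first [apply Hu | apply Hv | apply Hw | lra]
    | _ => lra
    end.
Qed.

Definition bool4 (b0 b1 b2 b3 : bool) (i : nat) : bool :=
  match i with 0%nat => b0 | 1%nat => b1 | 2%nat => b2 | _ => b3 end.

Lemma edge_bool4 k b z :
  edge lo hi k b z <-> edge lo hi k (bool4 (b 0%nat) (b 1%nat) (b 2%nat) (b 3%nat)) z.
Proof.
  assert (Hb : forall i, (i < 4)%nat -> bool4 (b 0%nat) (b 1%nat) (b 2%nat) (b 3%nat) i = b i)
    by (intros [|[|[|[|i]]]] Hi; try lia; reflexivity).
  unfold edge; split; intros [Bz Ez]; split; auto; intros i Hi Hik;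
    [rewrite Hb | rewrite <- Hb]; auto.
Qed.

Lemma extreme_conv_ext (S S' : pt -> Prop) z :
  (forall x, S x <-> S' x) -> extreme (conv S) z -> extreme (conv S') z.
Proof.
  intros H [C E]; split; [eapply conv_mono; [|exact C]; apply H|].
  intros x y t Cx Cy; apply E; (eapply conv_mono; [|eassumption]); apply H.
Qed.

Lemma Vset_finite : finite (Vset lo hi).
Proof.
  apply (finite_sub _ (fun z => exists k, (k < 4)%nat /\ exists b0 b1 b2 b3,
    extreme (conv (edgeG lo hi k (bool4 b0 b1 b2 b3))) z)).
  - intros z [k [b [Hk He]]]; exists k; split; auto.
    exists (b 0%nat), (b 1%nat), (b 2%nat), (b 3%nat).
    eapply extreme_conv_ext; [|exact He]; intros x; unfold edgeG; rewrite <- edge_bool4; tauto.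
  - apply finite_ex_lt4; intros k Hk; repeat (apply finite_ex_bool; intros ?).
    apply finite_at_most_two, edge_extreme_at_most_two; auto.
Qed.

End EdgeExtremeFinite.

(** * Convex combinations of an enumeration *)

Definition mix_weights (t : R) (l1 l2 : list R) : list R :=
  map (fun p => t * fst p + (1 - t) * snd p) (combine l1 l2).

Definition comb_point (lam : list R) (l : list pt) : pt :=
  psum (map (fun p => pscale (fst p) (snd p)) (combine lam l)).

Lemma mix_weights_sum_point t (m1 m2 : list R) (l : list pt) :
  length m1 = length l -> length m2 = length l ->
  fold_right Rplus 0 (mix_weights t m1 m2)
    = t * fold_right Rplus 0 m1 + (1 - t) * fold_right Rplus 0 m2 /\
  comb_point (mix_weights t m1 m2) l
    = padd (pscale t (comb_point m1 l)) (pscale (1 - t) (comb_point m2 l)).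
Proof.
  revert m2 l; induction m1 as [|a m1 IH]; intros [|b m2] [|c l] E1 E2;
    simpl in *; try lia; [split; [ring | apply pt_ext; simpl; ring]|].
  destruct (IH m2 l) as [A B]; try lia; unfold mix_weights, comb_point in A, B.
  unfold comb_point; simpl; rewrite A, B; split; [ring | apply pt_ext; simpl; ring].
Qed.

Lemma comb_of_convex (l : list pt) : convex (comb_of l).
Proof.
  intros x y t [l1 [L1 [N1 [S1 Z1]]]] [l2 [L2 [N2 [S2 Z2]]]] Ht.
  destruct (mix_weights_sum_point t l1 l2 l L1 L2) as [Hsum Hpt].
  exists (mix_weights t l1 l2); repeat split.
  - unfold mix_weights; rewrite length_map, length_combine; lia.
  - apply Forall_forall; intros r Hr; apply in_map_iff in Hr.
    destruct Hr as [[a b] [<- Hab]]; rewrite Forall_forall in N1, N2.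
    specialize (N1 a (in_combine_l _ _ _ _ Hab)); specialize (N2 b (in_combine_r _ _ _ _ Hab)).
    simpl; nra.
  - rewrite Hsum, S1, S2; ring.
  - fold (comb_point (mix_weights t l1 l2) l); rewrite Hpt, Z1, Z2; reflexivity.
Qed.

Lemma comb_of_In (l : list pt) v : In v l -> comb_of l v.
Proof.
  induction l as [|a l IH]; [simpl; tauto|]; intros [<-|H].
  - exists (1 :: repeat 0 (length l)); repeat split.
    + simpl; rewrite repeat_length; auto.
    + constructor; [lra|]; apply Forall_forall; intros x Hx; apply repeat_spec in Hx; lra.
    + simpl; rewrite <- (Rplus_0_r 1) at 2; f_equal.
      induction (length l); simpl; auto; lra.
    + assert (Hz : forall n (l' : list pt), comb_point (repeat 0 n) l' = pzero).
      { induction n; intros [|c l']; unfold comb_point in *; simpl; auto.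
        rewrite IHn; apply pt_ext; simpl; ring. }
      change (a = padd (pscale 1 a) (comb_point (repeat 0 (length l)) l)); rewrite Hz.
      apply pt_ext; simpl; ring.
  - destruct (IH H) as [lam [Hl [Hn [Hs Hz]]]]; exists (0 :: lam); repeat split.
    + simpl; auto.
    + constructor; auto; lra.
    + simpl; lra.
    + simpl; rewrite <- Hz; apply pt_ext; simpl; ring.
Qed.

Lemma comb_of_iff_conv (V : pt -> Prop) (l : list pt) : (forall z, V z <-> In z l) ->
  forall z, comb_of l z <-> conv V z.
Proof.
  intros HV z; split.
  - intros [lam [Hl [Hn [Hs Hz]]]]; exists (combine lam l); repeat split; auto.
    + apply Forall_forall; intros [a s] Has; split.
      * rewrite Forall_forall in Hn; apply Hn; eapply in_combine_l; eauto.
      * apply HV; eapply in_combine_r; eauto.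
    + rewrite <- Hs; clear -Hl; revert l Hl.
      induction lam; intros [|c l] Hl; simpl in *; try lia; auto; rewrite IHlam; auto.
  - intros H; apply (convex_conv_sub _ (comb_of_convex l)); eapply conv_mono; [|exact H].
    intros x Hx; apply comb_of_In, HV; auto.
Qed.

Theorem proposition2 (lo hi : pt)
  (h1 : 0 <= cii lo) (h2 : cii lo < cii hi)
  (h3 : 0 <= cjj lo) (h4 : cjj lo < cjj hi)
  (h5 : cij lo < cij hi) (h6 : sij lo < sij hi) :
  (exists l : list pt, NoDup l /\ forall z, Vset lo hi z <-> In z l) /\
  (forall z, conv (Keq lo hi) z <-> (Kle lo hi z /\ conv (Vset lo hi) z)) /\
  (forall l : list pt, NoDup l -> (forall z, Vset lo hi z <-> In z l) ->
     forall z, conv (Keq lo hi) z <->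
       (box lo hi z /\ cij z ^ 2 + sij z ^ 2 <= cii z * cjj z /\ comb_of l z)).
Proof.
  assert (V_box_G : forall x, Vset lo hi x -> box lo hi x /\ Gset x).
  { intros x [k [b [Hk He]]]; apply extreme_conv_mem in He; destruct He as [[Bx _] Gx]; auto. }
  assert (hull_eq : forall z, conv (Keq lo hi) z <-> Kle lo hi z /\ conv (Vset lo hi) z).
  { intros z; split.
    - intros H; split; [apply conv_Keq_sub_Kle; auto|].
      apply conv_idem; eapply conv_mono; [|exact H]; intros x [Bx Qx].
      apply box_G_in_conv_V; auto; unfold Gset; lra.
    - intros [Kz Cz]; apply (Kle_conv_sub_conv_Keq lo hi _ z V_box_G Kz Cz). }
  split; [apply finite_enum, Vset_finite | split; auto].
  intros l _ HV z; rewrite hull_eq, (comb_of_iff_conv _ l HV); unfold Kle; tauto.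
Qed.
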